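(* Let $\phi,\psi:\mathbb R_+\to\mathbb R_+$ be continuous strictly increasing functions with $\phi(0)=\psi(0)=0$ and $\lim_{t\to\infty}\phi(t)=\lim_{t\to\infty}\psi(t)=\infty$, and let $H^\psi$ denote the Hausdorff measure with determining function $\psi$. For every measurable $f:[0,1]\to\mathbb R$, $$H^\psi\Big(x\in[0,1]:\limsup_{h\to0^+}\frac{|f(x+h)-f(x)|}{\phi(h)}>1\Big)\le\mathcal V^*_{\psi\circ\phi^{-1}}(f).$$
   Context: For a function $\Phi$ and a partition $\pi=\{0=t_0<\dots<t_n=1\}$, $v_\Phi(f,\pi)=\sum_{i=1}^n\Phi(|f(t_i)-f(t_{i-1})|)$, $|\pi|=\max_i(t_i-t_{i-1})$, $\Pi_\delta$ is the set of partitions with $|\pi|\le\delta$, and the limiting $\Phi$-variation is $\mathcal V^*_\Phi(f)=\lim_{\delta\to0}\sup\{v_\Phi(f,\pi):\pi\in\Pi_\delta\}$. In the limsup only $h>0$ with $x+h\le1$ are considered. When $\psi$ is the identity, $H^\psi$ is Lebesgue measure. *)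

From Stdlib Require Import Reals Lra.
Open Scope R_scope.

Definition cont_nonneg (g : R -> R) : Prop :=
  forall t, 0 <= t -> forall eps, 0 < eps -> exists del, 0 < del /\
    forall s, 0 <= s -> Rabs (s - t) < del -> Rabs (g s - g t) < eps.

Definition admissible (g : R -> R) : Prop :=
  cont_nonneg g /\
  (forall s t, 0 <= s -> s < t -> g s < g t) /\
  g 0 = 0 /\
  (forall M, exists T, forall t, T <= t -> M <= g t).

(* "H^psi(E) <= c" for the Hausdorff (outer) measure with determining
   function psi:  H^psi(E) = lim_{delta->0} inf { sum_n psi(diam U_n) :
   E subset U_n U_n, diam U_n <= delta }.  A cover is given by sets U n
   together with bounds d n >= diam (U n); since psi is increasing the
   infimum is the same as with d n = diam (U n).  The series of
   nonnegative terms is bounded via its partial sums (value in [0,+oo]). *)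
Definition H_le (psi : R -> R) (E : R -> Prop) (c : R) : Prop :=
  forall delta eps, 0 < delta -> 0 < eps ->
    exists (U : nat -> R -> Prop) (d : nat -> R),
      (forall n, 0 <= d n <= delta) /\
      (forall n x y, U n x -> U n y -> Rabs (x - y) <= d n) /\
      (forall x, E x -> exists n, U n x) /\
      (forall N, sum_f_R0 (fun n => psi (d n)) N <= c + eps).

Definition leb_outer_le (E : R -> Prop) (c : R) : Prop := H_le (fun r => r) E c.

Definition leb_measurable (E : R -> Prop) : Prop :=
  forall (A : R -> Prop) c, leb_outer_le A c ->
    exists a b, leb_outer_le (fun x => A x /\ E x) a /\
                leb_outer_le (fun x => A x /\ ~ E x) b /\ a + b <= c.

Definition measurable_on01 (f : R -> R) : Prop :=
  forall a, leb_measurable (fun x => 0 <= x <= 1 /\ a < f x).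

Definition is_partition (n : nat) (t : nat -> R) : Prop :=
  (0 < n)%nat /\ t 0%nat = 0 /\ t n = 1 /\
  (forall i, (i < n)%nat -> t i < t (S i)).

Definition mesh_le (n : nat) (t : nat -> R) (delta : R) : Prop :=
  forall i, (i < n)%nat -> t (S i) - t i <= delta.

Fixpoint fsum (g : nat -> R) (n : nat) : R :=
  match n with O => 0 | S k => fsum g k + g k end.

Definition v_Phi (Phi f : R -> R) (n : nat) (t : nat -> R) : R :=
  fsum (fun i => Phi (Rabs (f (t (S i)) - f (t i)))) n.

(* "V*_Phi(f) <= c" where V*_Phi(f) = lim_{delta->0} sup_{pi in Pi_delta} v_Phi(f,pi)
   (the sup is nonincreasing as delta decreases, so the limit is the inf). *)
Definition Vstar_le (Phi f : R -> R) (c : R) : Prop :=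
  forall eps, 0 < eps -> exists delta, 0 < delta /\
    forall n t, is_partition n t -> mesh_le n t delta ->
      v_Phi Phi f n t <= c + eps.

Definition limsup_gt1 (phi f : R -> R) (x : R) : Prop :=
  exists c, 1 < c /\ forall eta, 0 < eta ->
    exists h, 0 < h < eta /\ x + h <= 1 /\
      c < Rabs (f (x + h) - f x) / phi h.

From Stdlib Require Import Reals Lra Lia List Wf_nat Classical ClassicalEpsilon.
Open Scope R_scope.

(* Fix delta and eps, and take a mesh d1 with v(f, pi) <= c + eps/2 for every partition pi
   of mesh at most d1.  Call [x, x + h] steep if h <= min delta d1 and
   |f(x+h) - f(x)| > phi(h); every point of the set has arbitrarily short steep intervals
   starting at it.  For a steep interval h <= phi^-1(|f(x+h) - f(x)|), so for any finite
   disjoint family of steep intervals sum psi(h) is bounded by the variation of a fine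
   partition through their endpoints, hence by c + eps/2.  A greedy Vitali-type
   selection then picks disjoint steep intervals, each nearly longest among those still
   free (psi(reach) <= 2 psi(len)).  Their psi-lengths are summable; a point not covered
   by the first k0 of them has a short steep interval which meets a later chosen one, so
   it lies in that interval or in the segment of length reach to its left.  These extra
   segments cost at most twice the tail of the series. *)

Lemma incr_le (g : R -> R) :
  (forall s t, 0 <= s -> s < t -> g s < g t) ->
  forall s t, 0 <= s -> s <= t -> g s <= g t.
Proof.
  intros Hg s t Hs Hst. destruct (Req_dec s t) as [->|Hne]; [lra|].
  left; apply Hg; lra.
Qed.

Lemma fsum_add (g : nat -> R) n1 n2 :
  fsum g (n1 + n2) = fsum g n1 + fsum (fun i => g (n1 + i)%nat) n2.
Proof.
  induction n2 as [|n2 IH]; simpl.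
  - rewrite Nat.add_0_r; lra.
  - rewrite Nat.add_succ_r; simpl; rewrite IH; lra.
Qed.

Lemma fsum_ext (g h : nat -> R) n :
  (forall i, (i < n)%nat -> g i = h i) -> fsum g n = fsum h n.
Proof.
  induction n as [|n IH]; intros Hgh; simpl; [reflexivity|].
  rewrite IH, Hgh; [reflexivity|lia|intros; apply Hgh; lia].
Qed.

Lemma fsum_nonneg (g : nat -> R) n :
  (forall i, (i < n)%nat -> 0 <= g i) -> 0 <= fsum g n.
Proof.
  induction n as [|n IH]; intros Hg; simpl; [lra|].
  assert (0 <= g n) by (apply Hg; lia).
  assert (0 <= fsum g n) by (apply IH; intros; apply Hg; lia).
  lra.
Qed.

Definition partition_of (lo hi : R) (n : nat) (t : nat -> R) : Prop :=
  t 0%nat = lo /\ t n = hi /\ (forall i, (i < n)%nat -> t i < t (S i)).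

Definition apart (p q : R * R) : Prop :=
  fst p + snd p < fst q \/ fst q + snd q < fst p.

Definition within (delta lo hi : R) (q : R * R) : Prop :=
  lo <= fst q /\ 0 < snd q <= delta /\ fst q + snd q <= hi.

Fixpoint lsum {A : Type} (g : A -> R) (L : list A) : R :=
  match L with nil => 0 | q :: L' => g q + lsum g L' end.

Lemma lsum_le {A : Type} (g h : A -> R) L :
  Forall (fun q => g q <= h q) L -> lsum g L <= lsum h L.
Proof. induction 1; simpl; lra. Qed.

Lemma lsum_filter {A : Type} (g : A -> R) (P : A -> bool) L :
  lsum g L = lsum g (filter P L) + lsum g (filter (fun q => negb (P q)) L).
Proof. induction L as [|q L IH]; simpl; [lra|]. destruct (P q); simpl; lra. Qed.

Lemma ForallOrdPairs_filter {A : Type} (Rel : A -> A -> Prop) (P : A -> bool) L :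
  ForallOrdPairs Rel L -> ForallOrdPairs Rel (filter P L).
Proof.
  induction 1 as [|q L Hq _ IH]; simpl; [constructor|].
  destruct (P q); [|assumption].
  constructor; [|assumption].
  rewrite Forall_forall in *; intros r Hr; apply filter_In in Hr; apply Hq, Hr.
Qed.

Definition increment (Phi f : R -> R) (q : R * R) : R :=
  Phi (Rabs (f (fst q + snd q) - f (fst q))).

Section Partitions.
Variables (Phi f : R -> R) (delta : R).
Hypothesis Phi_nonneg : forall y, 0 <= y -> 0 <= Phi y.
Hypothesis delta_pos : 0 < delta.

Lemma v_Phi_nonneg n t : 0 <= v_Phi Phi f n t.
Proof. apply fsum_nonneg; intros; apply Phi_nonneg, Rabs_pos. Qed.

Lemma partition_concat lo mid hi n1 t1 n2 t2 :
  partition_of lo mid n1 t1 -> partition_of mid hi n2 t2 ->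
  mesh_le n1 t1 delta -> mesh_le n2 t2 delta ->
  exists n t, partition_of lo hi n t /\ mesh_le n t delta /\
    v_Phi Phi f n t = v_Phi Phi f n1 t1 + v_Phi Phi f n2 t2.
Proof.
  intros [A1 [B1 C1]] [A2 [B2 C2]] M1 M2.
  set (t := fun i => if (i <=? n1)%nat then t1 i else t2 (i - n1)%nat).
  assert (T1 : forall i, (i <= n1)%nat -> t i = t1 i).
  { intros i Hi; unfold t; apply Nat.leb_le in Hi; rewrite Hi; reflexivity. }
  assert (T2 : forall j, t (n1 + j)%nat = t2 j).
  { intros [|j]; unfold t.
    - rewrite Nat.add_0_r, Nat.leb_refl, B1, A2; reflexivity.
    - replace (n1 + S j <=? n1)%nat with false by (symmetry; apply Nat.leb_gt; lia).
      f_equal; lia. }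
  assert (Step : forall i, (i < n1 + n2)%nat ->
    (exists k, (k < n1)%nat /\ t i = t1 k /\ t (S i) = t1 (S k)) \/
    (exists k, (k < n2)%nat /\ t i = t2 k /\ t (S i) = t2 (S k))).
  { intros i Hi. destruct (Compare_dec.le_lt_dec n1 i) as [H|H].
    - right; exists (i - n1)%nat; split; [lia|].
      rewrite <- !T2. split; f_equal; lia.
    - left; exists i; split; [lia|]. rewrite !T1 by lia; auto. }
  exists (n1 + n2)%nat, t; repeat split.
  - rewrite T1 by lia; assumption.
  - rewrite T2; assumption.
  - intros i Hi; destruct (Step i Hi) as [[k [Hk [-> ->]]]|[k [Hk [-> ->]]]]; auto.
  - intros i Hi; destruct (Step i Hi) as [[k [Hk [-> ->]]]|[k [Hk [-> ->]]]]; auto.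
  - unfold v_Phi; rewrite fsum_add; f_equal; apply fsum_ext; intros i Hi.
    + rewrite !T1 by lia; reflexivity.
    + replace (S (n1 + i)) with (n1 + S i)%nat by lia. rewrite !T2; reflexivity.
Qed.

Lemma fine_partition_exists lo hi :
  lo <= hi -> exists n t, partition_of lo hi n t /\ mesh_le n t delta.
Proof.
  intros Hle. destruct (Req_dec lo hi) as [<-|Hne].
  { exists 0%nat, (fun _ => lo); split; [repeat split; intros; lia|intros i Hi; lia]. }
  destruct (INR_unbounded ((hi - lo) / delta)) as [n Hn].
  assert (Hq : 0 < (hi - lo) / delta) by (apply Rdiv_lt_0_compat; lra).
  assert (Hnp : 0 < INR n) by lra.
  assert (Hstep : (hi - lo) / INR n <= delta).
  { apply Rmult_le_reg_r with (INR n); [assumption|].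
    unfold Rdiv; rewrite Rmult_assoc, Rinv_l by lra.
    apply Rmult_lt_compat_r with (r := delta) in Hn; [|assumption].
    unfold Rdiv in Hn; rewrite Rmult_assoc, Rinv_l, Rmult_1_r in Hn by lra. lra. }
  assert (Hpos : 0 < (hi - lo) / INR n) by (apply Rdiv_lt_0_compat; lra).
  exists n, (fun i => lo + INR i * ((hi - lo) / INR n)); repeat split.
  - simpl; ring.
  - field; lra.
  - intros i _; rewrite S_INR; nra.
  - intros i _; rewrite S_INR; lra.
Qed.

Lemma one_step_partition a l :
  0 < l -> l <= delta ->
  exists n t, partition_of a (a + l) n t /\ mesh_le n t delta /\
    v_Phi Phi f n t = increment Phi f (a, l).
Proof.
  intros Hl Hld. exists 1%nat, (fun i => match i with O => a | _ => a + l end).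
  repeat split; try (intros i Hi; replace i with 0%nat by lia; lra).
  unfold v_Phi, increment; simpl; lra.
Qed.

(* Split the family at its first interval [a, a + l]: by disjointness the
   others lie either in [lo, a] or in [a + l, hi]. *)
Lemma partition_dominates (L : list (R * R)) : forall lo hi,
  lo <= hi -> Forall (within delta lo hi) L -> ForallOrdPairs apart L ->
  exists n t, partition_of lo hi n t /\ mesh_le n t delta /\
    lsum (increment Phi f) L <= v_Phi Phi f n t.
Proof.
  induction L as [L IH] using (induction_ltof1 _ (@length (R * R))).
  intros lo hi Hle Hin Hap.
  destruct L as [|[a l] L].
  { destruct (fine_partition_exists lo hi Hle) as [n [t [Hp Hm]]].
    exists n, t; split; [|split]; try assumption. apply v_Phi_nonneg; assumption. }
  inversion Hap as [|? ? Hhead Htail]; inversion Hin as [|? ? [Ha [Hl Hal]] Hin']; subst.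
  simpl in Ha, Hl, Hal.
  set (P := fun q : R * R => if Rlt_dec (fst q) a then true else false).
  assert (Hleft : Forall (within delta lo a) (filter P L)).
  { rewrite Forall_forall in *; intros q Hq; apply filter_In in Hq as [Hq Pq].
    specialize (Hin' q Hq); specialize (Hhead q Hq).
    unfold P in Pq; destruct (Rlt_dec (fst q) a); [|discriminate].
    unfold within, apart in *; simpl in *; lra. }
  assert (Hright : Forall (within delta (a + l) hi) (filter (fun q => negb (P q)) L)).
  { rewrite Forall_forall in *; intros q Hq; apply filter_In in Hq as [Hq Pq].
    specialize (Hin' q Hq); specialize (Hhead q Hq).
    unfold P in Pq; destruct (Rlt_dec (fst q) a); [discriminate|].
    unfold within, apart in *; simpl in *; lra. }
  destruct (IH (filter P L)) with lo a as [n1 [t1 [P1 [M1 S1]]]];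
    [unfold ltof; simpl; pose proof (filter_length_le P L); lia|lra|assumption|
     apply ForallOrdPairs_filter; assumption|].
  destruct (IH (filter (fun q => negb (P q)) L)) with (a + l) hi as [n3 [t3 [P3 [M3 S3]]]];
    [unfold ltof; simpl; pose proof (filter_length_le (fun q => negb (P q)) L); lia|lra|assumption|
     apply ForallOrdPairs_filter; assumption|].
  destruct (one_step_partition a l) as [n2 [t2 [P2 [M2 S2]]]]; try lra.
  destruct (partition_concat a (a + l) hi n2 t2 n3 t3) as [n4 [t4 [P4 [M4 S4]]]];
    try assumption.
  destruct (partition_concat lo a hi n1 t1 n4 t4) as [n5 [t5 [P5 [M5 S5]]]];
    try assumption.
  exists n5, t5; split; [|split]; try assumption.
  simpl; rewrite (lsum_filter _ P L), S5, S4, S2; lra.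
Qed.

End Partitions.

Lemma bounded_series_tail (w : nat -> R) (C : R) :
  (forall n, 0 <= w n) -> (forall N, sum_f_R0 w N <= C) ->
  forall eps, 0 < eps -> exists k, forall N, (k <= N)%nat ->
    sum_f_R0 w N - sum_f_R0 w k < eps.
Proof.
  intros Hw HC eps Heps.
  assert (Hgrow : Un_growing (sum_f_R0 w)) by (intros n; simpl; specialize (Hw (S n)); lra).
  destruct (growing_cv _ Hgrow) as [l Hl].
  { exists C; intros r [N ->]; apply HC. }
  destruct (Hl eps Heps) as [k Hk].
  exists k; intros N _.
  specialize (Hk k (Nat.le_refl k)); unfold Rdist in Hk.
  pose proof (growing_ineq _ _ Hgrow Hl N).
  apply Rabs_def2 in Hk; lra.
Qed.

Lemma sum_f_R0_after_le (a b : nat -> R) (k N : nat) :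
  (forall j, 0 <= a j) ->
  (forall j, (j <= k)%nat -> b j <= 0) -> (forall j, (k < j)%nat -> b j <= a j) ->
  sum_f_R0 b N <= sum_f_R0 a (Nat.max N k) - sum_f_R0 a k.
Proof.
  intros Ha Hb0 Hb. induction N as [|N IH]; cbn [sum_f_R0].
  - rewrite Nat.max_r by lia. specialize (Hb0 0%nat ltac:(lia)). lra.
  - destruct (Compare_dec.le_lt_dec (S N) k) as [HN|HN].
    + rewrite Nat.max_r in * by lia. specialize (Hb0 (S N) HN). lra.
    + rewrite Nat.max_l by lia. rewrite Nat.max_l in IH by lia.
      cbn [sum_f_R0]. specialize (Hb (S N) HN). lra.
Qed.

Definition interleave {A : Type} (a b : nat -> A) (n : nat) : A :=
  if Nat.even n then a (Nat.div2 n) else b (Nat.div2 n).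

Lemma interleave_even {A : Type} (a b : nat -> A) j : interleave a b (2 * j) = a j.
Proof. unfold interleave; rewrite Nat.even_mul, Nat.div2_double; reflexivity. Qed.

Lemma interleave_odd {A : Type} (a b : nat -> A) j : interleave a b (S (2 * j)) = b j.
Proof.
  unfold interleave; rewrite Nat.even_succ, Nat.odd_mul, Nat.div2_succ_double; reflexivity.
Qed.

Lemma sum_interleave_le (a b : nat -> R) N :
  (forall n, 0 <= a n) -> (forall n, 0 <= b n) ->
  sum_f_R0 (interleave a b) N <= sum_f_R0 a N + sum_f_R0 b N.
Proof.
  intros Ha Hb.
  assert (Hpairs : forall M, sum_f_R0 (interleave a b) (S (2 * M)) = sum_f_R0 a M + sum_f_R0 b M).
  { induction M as [|M IH].
    - simpl; unfold interleave; simpl; lra.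
    - replace (S (2 * S M)) with (S (S (S (2 * M)))) by lia; cbn [sum_f_R0] in *.
      rewrite IH. replace (S (S (2 * M))) with (2 * S M)%nat by lia.
      rewrite interleave_even, interleave_odd. lra. }
  assert (Hmono : forall m, sum_f_R0 (interleave a b) N <= sum_f_R0 (interleave a b) (N + m)).
  { induction m as [|m IH]; [rewrite Nat.add_0_r; lra|].
    rewrite Nat.add_succ_r; simpl.
    assert (0 <= interleave a b (S (N + m))) by (unfold interleave; destruct Nat.even; auto).
    lra. }
  specialize (Hmono (S N)). replace (N + S N)%nat with (S (2 * N)) in Hmono by lia.
  rewrite Hpairs in Hmono. exact Hmono.
Qed.

Lemma short_intervals_apart (L : list (R * R)) (x : R) :
  Forall (fun q => ~ (fst q <= x <= fst q + snd q)) L ->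
  exists eta, 0 < eta /\ forall h, 0 < h < eta -> Forall (apart (x, h)) L.
Proof.
  induction 1 as [|q L Hq _ [eta [Heta IH]]].
  - exists 1; split; [lra|]; constructor.
  - destruct (Rlt_dec x (fst q)) as [Hlt|Hge].
    + exists (Rmin eta (fst q - x)); split; [apply Rmin_pos; lra|].
      intros h Hh. pose proof (Rmin_l eta (fst q - x)); pose proof (Rmin_r eta (fst q - x)).
      constructor; [left; simpl; lra|apply IH; lra].
    + exists eta; split; [assumption|].
      intros h Hh; constructor; [right; simpl; lra|apply IH; lra].
Qed.

Definition has_cover (psi : R -> R) (delta : R) (E : R -> Prop) (s : R) : Prop :=
  exists (U : nat -> R -> Prop) (d : nat -> R),
    (forall n, 0 <= d n <= delta) /\
    (forall n x y, U n x -> U n y -> Rabs (x - y) <= d n) /\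
    (forall x, E x -> exists n, U n x) /\
    (forall N, sum_f_R0 (fun n => psi (d n)) N <= s).

Lemma has_cover_weaken psi delta delta' E s s' :
  delta <= delta' -> s <= s' -> has_cover psi delta E s -> has_cover psi delta' E s'.
Proof.
  intros Hd Hs [U [d [H1 [H2 [H3 H4]]]]]; exists U, d; repeat split; auto.
  - apply H1.
  - specialize (H1 n); lra.
  - intros N; specialize (H4 N); lra.
Qed.

Section GreedySelection.
Variables (G : R -> R -> Prop) (psi : R -> R) (delta C : R).
Hypothesis psi_cont : cont_nonneg psi.
Hypothesis psi_incr : forall s t, 0 <= s -> s < t -> psi s < psi t.
Hypothesis psi0 : psi 0 = 0.
Hypothesis delta_nonneg : 0 <= delta.
Hypothesis G_small : forall x h, G x h -> 0 < h <= delta.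
Hypothesis G_packing : forall L, Forall (fun q => G (fst q) (snd q)) L ->
  ForallOrdPairs apart L -> lsum (fun q => psi (snd q)) L <= C.

Lemma psi_nonneg s : 0 <= s -> 0 <= psi s.
Proof. intros; rewrite <- psi0; apply incr_le; auto; lra. Qed.

Lemma psi_pos s : 0 < s -> 0 < psi s.
Proof. intros; rewrite <- psi0; apply psi_incr; lra. Qed.

Record pick := Pick { start : R; len : R; reach : R }.

Definition ival (p : pick) : R * R := (start p, len p).

Definition free (S : list pick) (x h : R) : Prop :=
  G x h /\ Forall (fun p => apart (x, h) (ival p)) S.

Definition good_pick (S : list pick) (p : pick) : Prop :=
  free S (start p) (len p) /\ (forall x h, free S x h -> h <= reach p) /\
  psi (reach p) <= 2 * psi (len p) /\ reach p <= delta.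

Lemma good_pick_exists S x0 h0 : free S x0 h0 -> exists p, good_pick S p.
Proof.
  intros H0.
  set (A := fun h => exists x, free S x h).
  assert (HA : forall h, A h -> 0 < h <= delta) by (intros h [x [Hg _]]; apply (G_small x), Hg).
  destruct (completeness A) as [sup [Hub Hlub]].
  { exists delta; intros h Ah; apply HA, Ah. }
  { exists h0, x0; exact H0. }
  assert (Hh0 : 0 < h0 <= sup) by (split; [apply (HA h0)|apply Hub]; exists x0; exact H0).
  assert (Hsup : sup <= delta) by (apply Hlub; intros h Ah; apply HA, Ah).
  assert (Hpsi : 0 < psi sup) by (apply psi_pos; lra).
  destruct (psi_cont sup ltac:(lra) (psi sup / 2) ltac:(lra)) as [del [Hdel Hcont]].
  assert (Hnear : exists h, A h /\ sup - del < h).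
  { apply NNPP; intro Hn.
    assert (sup <= sup - del) by
      (apply Hlub; intros h Ah; apply Rnot_lt_le; intro Hlt; apply Hn; eauto).
    lra. }
  destruct Hnear as [h [[x Hx] Hh]].
  assert (Hhsup : 0 < h <= sup) by (split; [apply (HA h)|apply Hub]; exists x; exact Hx).
  exists (Pick x h sup); repeat split; simpl; try apply Hx; try assumption.
  - intros y h' Hy; apply Hub; exists y; exact Hy.
  - assert (Hle : psi h <= psi sup) by (apply incr_le; auto; lra).
    assert (Hclose : Rabs (psi h - psi sup) < psi sup / 2)
      by (apply Hcont; [lra|]; rewrite Rabs_left1; lra).
    rewrite Rabs_left1 in Hclose; lra.
Qed.

Definition next (S : list pick) : option pick :=
  match excluded_middle_informative (exists p, good_pick S p) with
  | left H => Some (proj1_sig (constructive_indefinite_description _ H))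
  | right _ => None
  end.

Fixpoint chosen (k : nat) : list pick :=
  match k with
  | O => nil
  | S k' => match next (chosen k') with Some p => p :: chosen k' | None => chosen k' end
  end.

Definition step (k : nat) : option pick := next (chosen k).

Lemma chosen_succ k :
  chosen (S k) = match step k with Some p => p :: chosen k | None => chosen k end.
Proof. reflexivity. Qed.

Lemma step_good k p : step k = Some p -> good_pick (chosen k) p.
Proof.
  unfold step, next; destruct excluded_middle_informative as [H|H]; [|discriminate].
  intros [= <-]; apply proj2_sig.
Qed.

Lemma step_some k x h : free (chosen k) x h -> exists p, step k = Some p.
Proof.
  intros Hfree; unfold step, next.
  destruct excluded_middle_informative as [H|H]; [eauto|].
  exfalso; apply H, (good_pick_exists _ _ _ Hfree).
Qed.

Lemma step_bounds k p : step k = Some p ->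
  0 < len p /\ len p <= reach p /\ reach p <= delta /\ psi (reach p) <= 2 * psi (len p).
Proof.
  intros Hp; destruct (step_good _ _ Hp) as [Hfree [Hmax [Hpsi Hreach]]].
  pose proof (Hmax _ _ Hfree); destruct Hfree as [Hg _]; apply G_small in Hg.
  repeat split; lra.
Qed.

Lemma in_chosen k p : In p (chosen k) <-> exists i, (i < k)%nat /\ step i = Some p.
Proof.
  induction k as [|k IH].
  { simpl; split; [tauto|intros [i [Hi _]]; lia]. }
  rewrite chosen_succ.
  assert (Hsucc : (exists i, (i < S k)%nat /\ step i = Some p) <->
                  step k = Some p \/ exists i, (i < k)%nat /\ step i = Some p).
  { split.
    - intros [i [Hi Hp]]; destruct (Nat.eq_dec i k) as [->|Hne]; [now left|].
      right; exists i; split; [lia|assumption].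
    - intros [Hp|[i [Hi Hp]]]; [exists k|exists i]; split; auto; lia. }
  rewrite Hsucc, <- IH.
  destruct (step k) as [q|]; simpl; [|split; [now right|intros [[=]|]; assumption]].
  split; intros [H|H]; auto; left; congruence.
Qed.

Lemma free_chosen k x h : G x h ->
  (forall i p, (i < k)%nat -> step i = Some p -> apart (x, h) (ival p)) ->
  free (chosen k) x h.
Proof.
  intros Hg Happ; split; [assumption|]; apply Forall_forall.
  intros p Hp; apply in_chosen in Hp as [i [Hi Hp]]; eauto.
Qed.

Lemma chosen_packing k :
  Forall (fun q => G (fst q) (snd q)) (map ival (chosen k)) /\
  ForallOrdPairs apart (map ival (chosen k)).
Proof.
  induction k as [|k [IHg IHa]]; [split; constructor|].
  rewrite chosen_succ.
  destruct (step k) as [p|] eqn:Hp; [|split; assumption].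
  destruct (step_good _ _ Hp) as [[Hg Happ] _].
  split; simpl; constructor; try assumption.
  apply Forall_map; exact Happ.
Qed.

Definition weight (j : nat) : R :=
  match step j with Some p => psi (len p) | None => 0 end.

Lemma weight_nonneg j : 0 <= weight j.
Proof.
  unfold weight; destruct (step j) as [p|] eqn:Hp; [|lra].
  apply psi_nonneg; pose proof (step_bounds _ _ Hp); lra.
Qed.

Lemma sum_weight_eq N :
  sum_f_R0 weight N = lsum (fun q => psi (snd q)) (map ival (chosen (S N))).
Proof.
  induction N as [|N IH]; cbn [sum_f_R0].
  - rewrite chosen_succ; unfold weight; destruct (step 0); simpl; lra.
  - rewrite IH, (chosen_succ (S N)); unfold weight.
    destruct (step (S N)); simpl; lra.
Qed.

Lemma sum_weight_le N : sum_f_R0 weight N <= C.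
Proof. rewrite sum_weight_eq; apply G_packing; apply chosen_packing. Qed.

Lemma free_weight j x h : free (chosen j) x h -> psi h <= 2 * weight j.
Proof.
  intros Hfree; destruct (step_some _ _ _ Hfree) as [p Hp].
  destruct (step_good _ _ Hp) as [_ [Hmax [Hpsi _]]].
  pose proof (Hmax _ _ Hfree); destruct Hfree as [Hg _]; apply G_small in Hg.
  assert (psi h <= psi (reach p)) by (apply incr_le; auto; lra).
  unfold weight; rewrite Hp; lra.
Qed.

(* Every G-interval meets a chosen one, since otherwise it would stay free
   forever and the weights could not tend to zero. *)
Lemma first_hit x h : G x h ->
  exists j p, step j = Some p /\ ~ apart (x, h) (ival p) /\ free (chosen j) x h.
Proof.
  intros Hg.
  set (P := fun j => exists p, step j = Some p /\ ~ apart (x, h) (ival p)).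
  assert (Hex : exists j, P j).
  { apply NNPP; intro Hnone.
    assert (Hfree : forall j, free (chosen j) x h).
    { intros j; apply free_chosen; [assumption|]; intros i p _ Hp.
      apply NNPP; intro Hn; apply Hnone; exists i, p; auto. }
    assert (Hh : 0 < psi h) by (apply psi_pos, (G_small x), Hg).
    destruct (bounded_series_tail weight C weight_nonneg sum_weight_le (psi h / 2))
      as [k Hk]; [lra|].
    specialize (Hk (S k) (Nat.le_succ_diag_r k)); cbn [sum_f_R0] in Hk.
    pose proof (free_weight _ _ _ (Hfree (S k))); lra. }
  destruct (dec_inh_nat_subset_has_unique_least_element P (fun j => classic (P j)) Hex)
    as [j [[[p [Hp Hhit]] Hleast] _]].
  exists j, p; split; [assumption|split; [assumption|]].
  apply free_chosen; [assumption|]; intros i q Hi Hq.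
  apply NNPP; intro Hn; specialize (Hleast i (ex_intro _ q (conj Hq Hn))); lia.
Qed.

Definition core (j : nat) (y : R) : Prop :=
  match step j with Some p => start p <= y <= start p + len p | None => False end.

Definition core_len (j : nat) : R :=
  match step j with Some p => len p | None => 0 end.

(* Points just left of a chosen interval, whose G-intervals it blocked;
   only intervals chosen after stage [k0] get one, so the halos cost a tail. *)
Definition halo (k0 j : nat) (y : R) : Prop :=
  (k0 < j)%nat /\
  match step j with Some p => start p - reach p <= y <= start p | None => False end.

Definition halo_len (k0 j : nat) : R :=
  if (k0 <? j)%nat then match step j with Some p => reach p | None => 0 end else 0.

Lemma cover_len_bounds k0 n : 0 <= interleave core_len (halo_len k0) n <= delta.
Proof.
  unfold interleave, core_len, halo_len; set (j := Nat.div2 n).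
  destruct Nat.even; [|destruct (k0 <? j)%nat; [|lra]];
    destruct (step j) as [p|] eqn:Hp; try (pose proof (step_bounds _ _ Hp)); lra.
Qed.

Lemma cover_diam k0 n x y :
  interleave core (halo k0) n x -> interleave core (halo k0) n y ->
  Rabs (x - y) <= interleave core_len (halo_len k0) n.
Proof.
  unfold interleave, core, core_len, halo, halo_len; destruct Nat.even.
  - destruct step; [|tauto]; intros; apply Rabs_le; lra.
  - intros [Hk Hx] [_ Hy]; apply Nat.ltb_lt in Hk; rewrite Hk.
    destruct step; [|tauto]; apply Rabs_le; lra.
Qed.

Lemma cover_covers k0 x :
  (forall eta, 0 < eta -> exists h, h < eta /\ G x h) ->
  exists n, interleave core (halo k0) n x.
Proof.
  intros Hsmall.
  destruct (classic (exists i p, (i <= k0)%nat /\ step i = Some p /\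
                                 start p <= x <= start p + len p))
    as [[i [p [_ [Hp Hx]]]]|Hout].
  { exists (2 * i)%nat; rewrite interleave_even; unfold core; rewrite Hp; exact Hx. }
  destruct (short_intervals_apart (map ival (chosen (S k0))) x) as [eta [Heta Hgap]].
  { apply Forall_forall; intros q Hq; apply in_map_iff in Hq as [p [<- Hp]].
    apply in_chosen in Hp as [i [Hi Hp]]; intro Hx; apply Hout.
    exists i, p; split; [lia|split; assumption]. }
  destruct (Hsmall eta Heta) as [h [Hh Hg]].
  pose proof (G_small _ _ Hg) as Hhpos.
  destruct (first_hit x h Hg) as [j [p [Hp [Hhit Hfree]]]].
  assert (Hj : (k0 < j)%nat).
  { destruct (Compare_dec.le_lt_dec j k0) as [Hjk|]; [exfalso|assumption].
    apply Hhit; specialize (Hgap h ltac:(lra)); rewrite Forall_forall in Hgap.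
    apply Hgap, in_map, in_chosen; exists j; split; [lia|assumption]. }
  destruct (step_good _ _ Hp) as [_ [Hmax _]]; specialize (Hmax _ _ Hfree).
  unfold apart, ival in Hhit; simpl in Hhit.
  apply not_or_and in Hhit as [H1 H2]; apply Rnot_lt_le in H1, H2.
  destruct (Rle_dec (start p) x).
  - exists (2 * j)%nat; rewrite interleave_even; unfold core; rewrite Hp; lra.
  - exists (S (2 * j)); rewrite interleave_odd; unfold halo; rewrite Hp; split; [assumption|lra].
Qed.

Lemma cover_cost k0 eps N :
  (forall M, (k0 <= M)%nat -> sum_f_R0 weight M - sum_f_R0 weight k0 < eps) ->
  sum_f_R0 (fun n => psi (interleave core_len (halo_len k0) n)) N <= C + 2 * eps.
Proof.
  intros Htail.
  assert (Hsplit : forall n, psi (interleave core_len (halo_len k0) n) =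
                             interleave weight (fun j => psi (halo_len k0 j)) n).
  { intros n; unfold interleave; destruct Nat.even; [|reflexivity].
    unfold core_len, weight; destruct step; auto. }
  rewrite (sum_eq _ _ N (fun n _ => Hsplit n)).
  eapply Rle_trans; [apply sum_interleave_le; [apply weight_nonneg|]|].
  { intros j; apply psi_nonneg.
    pose proof (cover_len_bounds k0 (S (2 * j))); rewrite interleave_odd in H; lra. }
  pose proof (sum_weight_le N).
  pose proof (sum_f_R0_after_le (fun j => weight j * 2) (fun j => psi (halo_len k0 j)) k0 N)
    as Hhalo.
  rewrite <- !scal_sum in Hhalo.
  specialize (Htail (Nat.max N k0) (Nat.le_max_r _ _)).
  enough (sum_f_R0 (fun j => psi (halo_len k0 j)) N <=
          2 * sum_f_R0 weight (Nat.max N k0) - 2 * sum_f_R0 weight k0) by lra.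
  apply Hhalo.
  - intros j; pose proof (weight_nonneg j); lra.
  - intros j Hj; unfold halo_len.
    replace (k0 <? j)%nat with false by (symmetry; apply Nat.ltb_ge; lia); lra.
  - intros j Hj; unfold halo_len, weight.
    replace (k0 <? j)%nat with true by (symmetry; apply Nat.ltb_lt; lia).
    destruct (step j) as [p|] eqn:Hp; [pose proof (step_bounds _ _ Hp)|]; lra.
Qed.

Theorem greedy_cover (E : R -> Prop) :
  (forall x, E x -> forall eta, 0 < eta -> exists h, h < eta /\ G x h) ->
  forall eps, 0 < eps -> has_cover psi delta E (C + eps).
Proof.
  intros HE eps Heps.
  destruct (bounded_series_tail weight C weight_nonneg sum_weight_le (eps / 2))
    as [k0 Hk0]; [lra|].
  exists (interleave core (halo k0)), (interleave core_len (halo_len k0)).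
  split; [apply cover_len_bounds|split; [apply cover_diam|split]].
  - intros x Ex; apply cover_covers, HE, Ex.
  - intros N; replace (C + eps) with (C + 2 * (eps / 2)) by field.
    apply cover_cost; assumption.
Qed.

End GreedySelection.

Definition steep (phi f : R -> R) (delta x h : R) : Prop :=
  0 <= x /\ 0 < h <= delta /\ x + h <= 1 /\ phi h < Rabs (f (x + h) - f x).

Lemma limsup_gt1_steep phi f delta x :
  (forall s t, 0 <= s -> s < t -> phi s < phi t) -> phi 0 = 0 ->
  0 < delta -> 0 <= x -> limsup_gt1 phi f x ->
  forall eta, 0 < eta -> exists h, h < eta /\ steep phi f delta x h.
Proof.
  intros phi_incr phi0 Hdelta Hx [c [Hc Hlim]] eta Heta.
  destruct (Hlim (Rmin eta delta)) as [h [[Hh Hhmin] [Hh1 Hratio]]];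
    [apply Rmin_pos; lra|].
  pose proof (Rmin_l eta delta); pose proof (Rmin_r eta delta).
  assert (Hphi : 0 < phi h) by (rewrite <- phi0; apply phi_incr; lra).
  exists h; split; [lra|repeat split; try lra].
  apply Rmult_lt_compat_r with (r := phi h) in Hratio; [|assumption].
  unfold Rdiv in Hratio; rewrite Rmult_assoc, Rinv_l, Rmult_1_r in Hratio by lra.
  nra.
Qed.

Lemma steep_cost_le phi psi phi_inv f delta x h :
  (forall s t, 0 <= s -> s < t -> phi s < phi t) ->
  (forall s t, 0 <= s -> s < t -> psi s < psi t) ->
  (forall y, 0 <= y -> 0 <= phi_inv y /\ phi (phi_inv y) = y) ->
  steep phi f delta x h -> psi h <= increment (fun y => psi (phi_inv y)) f (x, h).
Proof.
  intros phi_incr psi_incr Hinv [_ [Hh [_ Hsteep]]]; unfold increment; simpl.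
  set (y := Rabs (f (x + h) - f x)) in *.
  destruct (Hinv y (Rabs_pos _)) as [Hy0 Hy].
  apply incr_le; [assumption|lra|].
  apply Rnot_lt_le; intro Hlt.
  pose proof (phi_incr _ _ Hy0 Hlt); lra.
Qed.

Lemma steep_packing phi psi phi_inv f delta c :
  (forall s t, 0 <= s -> s < t -> phi s < phi t) ->
  (forall s t, 0 <= s -> s < t -> psi s < psi t) -> psi 0 = 0 ->
  (forall y, 0 <= y -> 0 <= phi_inv y /\ phi (phi_inv y) = y) -> 0 < delta ->
  (forall n t, is_partition n t -> mesh_le n t delta ->
     v_Phi (fun y => psi (phi_inv y)) f n t <= c) ->
  forall L, Forall (fun q => steep phi f delta (fst q) (snd q)) L ->
  ForallOrdPairs apart L -> lsum (fun q => psi (snd q)) L <= c.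
Proof.
  intros phi_incr psi_incr psi0 Hinv Hdelta Hfine L Hsteep Hap.
  assert (Phi_nonneg : forall y, 0 <= y -> 0 <= psi (phi_inv y)).
  { intros y Hy; rewrite <- psi0; apply incr_le; [assumption|lra|apply Hinv, Hy]. }
  destruct (partition_dominates _ f delta Phi_nonneg Hdelta L 0 1)
    as [n [t [[Ht0 [Htn Htincr]] [Hmesh Hdom]]]]; [lra| |assumption|].
  { eapply Forall_impl; [|exact Hsteep]; intros q [Hx [Hh [Hx1 _]]]; split; lra. }
  assert (Hn : (0 < n)%nat) by (destruct n; [rewrite Ht0 in Htn; lra|lia]).
  eapply Rle_trans; [|apply Hfine; [repeat split|]; eassumption].
  eapply Rle_trans; [|exact Hdom].
  apply lsum_le; eapply Forall_impl; [|exact Hsteep]; intros [x h].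
  apply steep_cost_le; assumption.
Qed.

Theorem lemma3p2 (phi psi phi_inv f : R -> R) :
  admissible phi -> admissible psi ->
  (forall y, 0 <= y -> 0 <= phi_inv y /\ phi (phi_inv y) = y) ->
  measurable_on01 f ->
  forall c : R,
    Vstar_le (fun y => psi (phi_inv y)) f c ->
    H_le psi (fun x => 0 <= x <= 1 /\ limsup_gt1 phi f x) c.
Proof.
  intros [_ [phi_incr [phi0 _]]] [psi_cont [psi_incr [psi0 _]]] Hinv _ c Hv
    delta eps Hdelta Heps.
  destruct (Hv (eps / 2)) as [d1 [Hd1 Hfine]]; [lra|].
  pose proof (Rmin_l delta d1); pose proof (Rmin_r delta d1).
  set (dl := Rmin delta d1) in *.
  assert (Hdl : 0 < dl) by (apply Rmin_pos; lra).
  apply has_cover_weaken with dl (c + eps / 2 + eps / 2); [lra|lra|].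
  apply (greedy_cover (steep phi f dl)); try assumption; try lra.
  - intros x h [_ [Hh _]]; exact Hh.
  - apply (steep_packing phi psi phi_inv f dl); try assumption.
    intros n t Ht Hmesh; apply Hfine; [assumption|].
    intros i Hi; specialize (Hmesh i Hi); lra.
  - intros x [[Hx _] Hlim]; apply limsup_gt1_steep; assumption.
Qed.
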